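(* Assume (G2) from the context, let $M:=2c_Dc^2$ and let $\alpha_M\in(0,1/4)$ be such that $M g(r)\le g(\alpha_Mr)$ for all $r>0$. Let $y\in X$, $r>0$ and $0<\alpha<\alpha_M$. Then $$G_{U(y,r)}(x,y)\ge\tfrac12\,G(x,y)\qquad\text{for all }x\in U(y,2\alpha r).$$
   Context: $(X,\rho)$ is a separable metric space; $U(x,r)$ the open ball. For every open $U\subseteq X$ and $x\in X$ a finite Borel measure $\mu_x^U$ on $X$ is given with $\mu_x^U(U)=0$, $\mu_x^U(X)\le1$, and $\mu_x^U=\varepsilon_x$ (Dirac) if $x\notin U$. $G\colon X\times X\to(0,\infty]$ is Borel. For open $V$, $G_V(x,y):=G(x,y)-\int G(z,y)\,d\mu_x^V(z)$ for $x,y\in V$ and $G_V:=0$ outside $V\times V$. (G2): there are a strictly decreasing continuous $g\colon[0,\infty)\to(0,\infty]$ and $c,c_D,M_0\in[1,\infty)$, $\alpha_0\in(0,1)$ with $g(r/2)\le c_Dg(r)$, $M_0g(r)\le g(\alpha_0r)$ for all $r>0$ and $c^{-1}g(\rho(x,y))\le G(x,y)\le c\,g(\rho(x,y))$ for all $x,y$. *)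

From HB Require Import structures.
From mathcomp Require Import all_boot all_order all_algebra.
From mathcomp Require Import all_classical all_reals all_analysis measurable_realfun.
Set Implicit Arguments. Unset Strict Implicit. Unset Printing Implicit Defensive.
Import Order.TTheory GRing.Theory Num.Theory.
Local Open Scope classical_set_scope.
Local Open Scope ring_scope.

Section Defs.
Context {R : realType} {X : Type}.

Definition is_metric (rho : X -> X -> R) : Prop :=
  (forall x y, 0 <= rho x y) /\ (forall x y, rho x y = 0 <-> x = y) /\
  (forall x y, rho x y = rho y x) /\
  (forall x y z, rho x z <= rho x y + rho y z).

Definition mball (rho : X -> X -> R) (x : X) (r : R) : set X :=
  [set z | rho x z < r].

Definition mopen (rho : X -> X -> R) (U : set X) : Prop :=
  forall x, U x -> exists2 e : R, 0 < e & mball rho x e `<=` U.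

Definition mseparable (rho : X -> X -> R) : Prop :=
  exists D : set X, countable D /\
    forall x (e : R), 0 < e -> exists z, D z /\ rho x z < e.
End Defs.

Definition GV {R : realType} {d} {X : measurableType d}
  (mu : set X -> X -> {measure set X -> \bar R}) (G : X -> X -> \bar R)
  (V : set X) (x y : X) : \bar R :=
  if asbool (V x /\ V y) then (G x y - \int[mu V x]_z G z y)%E else 0%E.

From HB Require Import structures.
From mathcomp Require Import all_boot all_order all_algebra.
From mathcomp Require Import all_classical all_reals all_analysis measurable_realfun.
From mathcomp Require Import ring lra.
Import Order.TTheory GRing.Theory Num.Theory.
Local Open Scope classical_set_scope.
Local Open Scope ring_scope.

(* Write U = U(y,r).  The measure mu_x^U has mass at most 1 and lives on the
   complement of U, where G(z,y) <= c g(r); so the integral subtracted in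
   G_U(x,y) is at most c g(r).  For x in U(y, 2 alpha r), monotonicity,
   doubling (from 2 alpha r up to 2 alpha_M r) and the choice of alpha_M give
   g(2 alpha r) >= 2 c^2 g(r), hence G(x,y) >= 2 c g(r) dominates twice the
   subtracted integral. *)

Section MetricBalls.
Context {R : realType} {X : Type} {rho : X -> X -> R}.
Hypothesis rho_metric : is_metric rho.

Lemma mball_mopen x r : mopen rho (mball rho x r).
Proof.
have [_ [_ [_ rho_tri]]] := rho_metric.
move=> z xz; exists (r - rho x z); first by rewrite subr_gt0.
move=> w; rewrite /mball /= in xz * => zw.
by have := rho_tri x z w; lra.
Qed.

Lemma mball_center x r : 0 < r -> mball rho x r x.
Proof. by have [_ [rho_eq0 _]] := rho_metric; rewrite /mball /= (rho_eq0 x x).2. Qed.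

Lemma notin_mball_ge x r z : ~ mball rho x r z -> r <= rho z x.
Proof.
have [_ [_ [rhoC _]]] := rho_metric.
by rewrite rhoC leNgt => /negP.
Qed.

End MetricBalls.

Section IntegralOutsideNullSet.
Context {d} {T : measurableType d} {R : realType}.
Context {m : {measure set T -> \bar R}} {U : set T}.
Hypotheses (mU : measurable U) (mU0 : m U = 0%E) (mT1 : (m setT <= 1)%E).

Lemma integral_le_bound_outside (f : T -> \bar R) (b : \bar R) :
  measurable_fun setT f -> (forall z, 0 <= f z)%E -> (0 <= b)%E ->
  (forall z, ~ U z -> f z <= b)%E -> (\int[m]_z f z <= b)%E.
Proof.
move=> mf f0 b0 fb.
rewrite -(setUv U) ge0_integral_setU //; last 3 first.
- exact: measurableC.
- by rewrite setUv.
- by rewrite /disj_set setICr.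
rewrite null_set_integral ?add0e //; last exact: measurable_funS mf.
apply: (@le_trans _ _ (\int[m]_(z in ~` U) cst b z)%E).
  apply: ge0_le_integral => //; first exact: measurableC.
  exact: measurable_funS mf.
rewrite integral_cst; last exact: measurableC.
rewrite -[leRHS]mule1; apply: lee_wpmul2l => //.
by apply: le_trans mT1; apply: le_measure; rewrite ?inE //; exact: measurableC.
Qed.

End IntegralOutsideNullSet.

Section DecreasingProfile.
Context {R : realType} {g : R -> \bar R}.
Hypothesis g_decr : forall s t : R, 0 <= s -> s < t -> (g t < g s)%E.

Lemma decr_profile_le s t : 0 <= s <= t -> (g t <= g s)%E.
Proof.
case/andP=> s0; rewrite le_eqVlt => /orP[/eqP-> //|st].
exact/ltW/g_decr.
Qed.

Lemma decr_profile_fin : (forall r, 0 <= r -> (0 < g r)%E) ->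
  forall t, 0 < t -> g t \is a fin_num.
Proof.
move=> g_gt0 t t0; rewrite ge0_fin_numE ?(ltW (g_gt0 _ (ltW t0))) //.
by apply: (lt_le_trans (g_decr (t / 2) t _ _)) (leey _); lra.
Qed.

Lemma doubling_scale_le {cD K aM a r : R} : 0 < cD ->
  (forall r, 0 < r -> (g (r / 2) <= cD%:E * g r)%E) ->
  (forall r, 0 < r -> ((cD * K)%:E * g r <= g (aM * r))%E) ->
  0 < a < aM -> 0 < r -> (K%:E * g r <= g (2 * a * r))%E.
Proof.
move=> cD0 g_doub g_scale /andP[a0 aaM] r0.
rewrite -(@lee_pmul2l _ cD%:E) ?lte_fin //.
rewrite muleA -EFinM; apply: le_trans (g_scale r r0) _.
have -> : aM * r = 2 * aM * r / 2 by field.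
apply: le_trans (g_doub _ _) _; first by rewrite !mulr_gt0 //; lra.
apply: lee_wpmul2l; first by rewrite lee_fin ltW.
by apply: decr_profile_le; apply/andP; split; nra.
Qed.

End DecreasingProfile.

Section ComparableKernel.
Context {R : realType} {X : Type} {rho : X -> X -> R}.
Context {g : R -> \bar R} {G : X -> X -> \bar R} {c : R}.
Hypotheses (rho_metric : is_metric rho) (c_gt0 : 0 < c).
Hypothesis g_decr : forall s t : R, 0 <= s -> s < t -> (g t < g s)%E.
Hypothesis G_g : forall x y, (c^-1%:E * g (rho x y) <= G x y)%E /\
                             (G x y <= c%:E * g (rho x y))%E.

Lemma kernel_le_notin_mball y r z : 0 <= r -> ~ mball rho y r z ->
  (G z y <= c%:E * g r)%E.
Proof.
move=> r0 yz; apply: le_trans (G_g z y).2 _.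
apply: lee_wpmul2l; first by rewrite lee_fin ltW.
by apply: decr_profile_le; rewrite // r0 notin_mball_ge.
Qed.

Lemma kernel_ge_mball {y s x} : mball rho y s x -> (c^-1%:E * g s <= G x y)%E.
Proof.
have [rho_ge0 [_ [rhoC _]]] := rho_metric.
move=> yx; apply: le_trans _ (G_g x y).1.
apply: lee_wpmul2l; first by rewrite lee_fin invr_ge0 ltW.
by apply: decr_profile_le; rewrite // rho_ge0 rhoC ltW.
Qed.

End ComparableKernel.

Lemma half_le_sube (R : realFieldType) (x y : \bar R) :
  y \is a fin_num -> (2%:E * y <= x -> 2^-1%:E * x <= x - y)%E.
Proof.
case: y => // u _; case: x => [v||] //=.
- by rewrite -!EFinM !lee_fin => ?; lra.
- by rewrite mulr_infty gtr0_sg ?invr_gt0 // mul1e leey.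
Qed.

Theorem lemma6p5 (R : realType) (d : measure_display) (X : measurableType d)
  (rho : X -> X -> R)
  (Hmetric : is_metric rho) (Hsep : mseparable rho)
  (HBorel : @measurable d X = <<s [set U | mopen rho U] >>)
  (mu : set X -> X -> {measure set X -> \bar R})
  (Hmu_U : forall U x, mopen rho U -> mu U x U = 0%E)
  (Hmu_X : forall U x, mopen rho U -> (mu U x setT <= 1)%E)
  (Hmu_dirac : forall U x, mopen rho U -> ~ U x ->
     forall A, measurable A -> mu U x A = \d_x A)
  (G : X -> X -> \bar R)
  (HGmeas : measurable_fun [set: X * X] (fun p : X * X => G p.1 p.2))
  (HGpos : forall x y, (0 < G x y)%E)
  (g : R -> \bar R) (c cD M0 alpha0 : R)
  (Hgpos : forall r : R, 0 <= r -> (0 < g r)%E)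
  (Hgdec : forall s t : R, 0 <= s -> s < t -> (g t < g s)%E)
  (Hgcont : {within [set r | 0 <= r], continuous g})
  (Hc : 1 <= c) (HcD : 1 <= cD) (HM0 : 1 <= M0)
  (Halpha0 : 0 < alpha0 < 1)
  (Hdoub : forall r : R, 0 < r -> (g (r / 2)%R <= cD%:E * g r)%E)
  (HM0g : forall r : R, 0 < r -> (M0%:E * g r <= g (alpha0 * r)%R)%E)
  (HG : forall x y, (c^-1%:E * g (rho x y) <= G x y)%E /\
                    (G x y <= c%:E * g (rho x y))%E)
  (alphaM : R) (HalphaM : 0 < alphaM < 4^-1)
  (HMg : forall r : R, 0 < r -> ((2 * cD * c ^+ 2)%:E * g r <= g (alphaM * r)%R)%E)
  (y : X) (r alpha : R) (Hr : 0 < r) (Halpha : 0 < alpha < alphaM) :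
  forall x, mball rho y (2 * alpha * r) x ->
    (2^-1%:E * G x y <= GV mu G (mball rho y r) x y)%E.
Proof.
move=> x xU.
set U := mball rho y r.
have [_ aM4] := andP HalphaM; have [_ aaM] := andP Halpha.
have c0 : 0 < c by apply: lt_le_trans Hc.
have cD0 : 0 < cD by apply: lt_le_trans HcD.
have U_open : mopen rho U := mball_mopen Hmetric y r.
have mU : measurable U by rewrite HBorel; exact: sub_sigma_algebra.
have gr_fin : g r \is a fin_num := decr_profile_fin Hgdec Hgpos r Hr.
have int_le : (\int[mu U x]_z G z y <= c%:E * g r)%E.
  apply: (integral_le_bound_outside mU (Hmu_U U x U_open) (Hmu_X U x U_open)).
  - exact: measurableT_comp HGmeas (pair2_measurable y).
  - by move=> z; exact/ltW.
  - by apply: mule_ge0; rewrite ?lee_fin ltW // Hgpos // ltW.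
  - by move=> z; apply: kernel_le_notin_mball => //; exact: ltW.
have G_ge : ((2 * c)%:E * g r <= G x y)%E.
  have g_scale t : 0 < t -> ((cD * (2 * c ^+ 2))%:E * g t <= g (alphaM * t)%R)%E.
    by rewrite mulrCA mulrA; exact: HMg.
  have -> : 2 * c = c^-1 * (2 * c ^+ 2) by field; exact: lt0r_neq0.
  apply: le_trans _ (kernel_ge_mball Hmetric c0 Hgdec HG xU).
  rewrite EFinM -muleA; apply: lee_wpmul2l; first by rewrite lee_fin invr_ge0 ltW.
  exact: (doubling_scale_le Hgdec cD0 Hdoub g_scale Halpha Hr).
have Ux : U x by apply: lt_trans xU _; nra.
rewrite /GV asboolT; last by split; last exact: mball_center.
apply: half_le_sube.
  rewrite ge0_fin_numE ?integral_ge0 //; last by move=> z _; exact/ltW.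
  by apply: le_lt_trans int_le _; rewrite -(fineK gr_fin) -EFinM ltry.
by apply: le_trans G_ge; rewrite EFinM -muleA; apply: lee_wpmul2l.
Qed.
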